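(* If $M$ is a centrally endo-AIP right $R$-module, then $S=\mathrm{End}_R(M)$ is a semiprime ring.
   Context: For $N\le M$, $l_S(N)=\{\phi\in S:\phi(N)=0\}$. An ideal $I$ of $S$ is centrally s-unital if for every $a\in I$ there is $z\in I$ central in $S$ with $az=a$. $M$ is centrally endo-AIP if $l_S(N)$ is a centrally s-unital ideal of $S$ for every fully invariant submodule $N$ of $M$. *)

From HB Require Import structures.
From mathcomp Require Import all_boot all_order all_algebra.
Set Implicit Arguments. Unset Strict Implicit. Unset Printing Implicit Defensive.
Import GRing.Theory.
Local Open Scope ring_scope.

(* A right R-module M is modelled as a left module over the converse ring R^c:
   the right action  m * r  is written  (r : R^c) *: m.
   S = End_R(M) is modelled as the set of R-linear maps M -> M, with
   ring operations pointwise addition and composition (f * g = f \o g). *)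

Section EndoRing.
Variables (R : nzRingType) (M : lmodType R^c).

Definition endo (f : M -> M) : Prop := linear f.

(* a two-sided ideal of S, given as a predicate on maps M -> M *)
Definition is_ideal (I : (M -> M) -> Prop) : Prop :=
  [/\ forall f, I f -> endo f,
      I (fun _ => 0),
      forall f g, I f -> I g -> I (fun x => f x - g x),
      forall f g, I f -> endo g -> I (g \o f)
    & forall f g, I f -> endo g -> I (f \o g)].

Definition is_submodule (N : M -> Prop) : Prop :=
  N 0 /\ forall (r : R^c) u v, N u -> N v -> N (r *: u + v).

Definition fully_invariant (N : M -> Prop) : Prop :=
  is_submodule N /\ forall phi, endo phi -> forall x, N x -> N (phi x).

Definition lS (N : M -> Prop) : (M -> M) -> Prop :=
  fun phi => endo phi /\ forall x, N x -> phi x = 0.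

Definition central_in_S (z : M -> M) : Prop :=
  endo z /\ forall g, endo g -> g \o z = z \o g.

Definition centrally_s_unital (I : (M -> M) -> Prop) : Prop :=
  is_ideal I /\
  forall a, I a -> exists z, [/\ I z, central_in_S z & a \o z = a].

Definition centrally_endo_AIP : Prop :=
  forall N, fully_invariant N -> centrally_s_unital (lS N).

Definition End_semiprime : Prop :=
  forall I, is_ideal I ->
    (forall a b, I a -> I b -> a \o b = (fun _ => 0)) ->
    forall a, I a -> a = (fun _ => 0).

End EndoRing.

(* For an ideal I of S with I^2 = 0, the submodule r_M(I) of elements killed by
   I is fully invariant, and I lies in l_S(r_M(I)).  A central s-unit z of
   l_S(r_M(I)) with a z = a gives a = z a; but a maps M into r_M(I) because
   I a = 0, and z kills r_M(I), so a = 0. *)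

From mathcomp Require Import all_boot all_order all_algebra.
From Stdlib Require Import FunctionalExtensionality.
Set Implicit Arguments.
Import GRing.Theory.
Local Open Scope ring_scope.

Section RightAnnihilator.
Variables (R : nzRingType) (M : lmodType R^c).

Lemma endo0 (f : M -> M) : endo f -> f 0 = 0.
Proof.
move=> lin_f; have := lin_f (-1) 0 0.
by rewrite scaleN1r oppr0 addr0 scaleN1r addNr.
Qed.

Definition rM (I : (M -> M) -> Prop) : M -> Prop :=
  fun x => forall b, I b -> b x = 0.

Lemma rM_submodule (I : (M -> M) -> Prop) :
  (forall f, I f -> endo f) -> is_submodule (rM I).
Proof.
move=> Iendo; split=> [b Ib | r u v Nu Nv b Ib]; first exact/endo0/Iendo.
by rewrite (Iendo b Ib) Nu // Nv // scaler0 addr0.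
Qed.

Lemma rM_fully_invariant (I : (M -> M) -> Prop) :
  is_ideal I -> fully_invariant (rM I).
Proof.
case=> Iendo _ _ _ Icompr; split; first exact: rM_submodule.
by move=> phi endo_phi x Nx b Ib; apply: (Nx _ (Icompr _ _ Ib endo_phi)).
Qed.

Lemma ideal_sub_lS_rM (I : (M -> M) -> Prop) a :
  is_ideal I -> I a -> lS (rM I) a.
Proof. by case=> Iendo _ _ _ _ Ia; split=> [|x Nx]; [apply: Iendo | apply: Nx]. Qed.

Lemma square_zero_ideal_image_rM (I : (M -> M) -> Prop) a :
  (forall b c, I b -> I c -> b \o c = (fun _ => 0)) ->
  I a -> forall x, rM I (a x).
Proof. by move=> I2 Ia x b Ib; rewrite -/((b \o a) x) I2. Qed.

Lemma centrally_s_unital_lS_image (N : M -> Prop) a :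
  centrally_s_unital (lS N) -> lS N a -> (forall x, N (a x)) ->
  a = (fun _ => 0).
Proof.
move=> [_ s_unit] lSa a_in_N.
have [z [[_ z_kills_N] [_ z_central] az]] := s_unit a lSa.
have [endo_a _] := lSa.
rewrite -az z_central //; apply: functional_extensionality => x.
exact: z_kills_N.
Qed.

End RightAnnihilator.

Theorem corollary3p2 (R : nzRingType) (M : lmodType R^c) :
  centrally_endo_AIP M -> End_semiprime M.
Proof.
move=> endo_AIP I ideal_I I2 a Ia.
apply: (centrally_s_unital_lS_image (endo_AIP _ (rM_fully_invariant ideal_I))).
- exact: ideal_sub_lS_rM.
- exact: square_zero_ideal_image_rM.
Qed.
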